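(* Let $E$ be a smooth functional on $\mathcal P(\Omega)$ that is $\beta$-strongly convex ($\beta\ge0$) with respect to the Fisher-Rao metric. Let $\rho_t,\rho^*$ be smooth positive probability densities with $\rho_t\ne\rho^*$, $R_t=\sqrt{\rho_t}$, $R^*=\sqrt{\rho^*}$, $H_t=\cos^{-1}\big(\int R_tR^*dx\big)$ and $$T_t(x)=\frac{2H_t}{\sin(H_t)}\,\frac{R^*(x)-R_t(x)\cos(H_t)}{R_t(x)}.$$ Then $$E(\rho^* )\ge E(\rho_t)+\int\Big(\frac{\delta E}{\delta\rho_t}-\mathbb{E}_{\rho_t}\Big[\frac{\delta E}{\delta\rho_t}\Big]\Big)T_t\rho_tdx+\frac\beta2\int T_t^2\rho_tdx.$$
   Context: Fisher-Rao metric: $g_\rho(\sigma_1,\sigma_2)=\int\Phi_1\rho(\Phi_2-\mathbb{E}_\rho[\Phi_2])dx$ where $\sigma_i=\rho(\Phi_i-\mathbb{E}_\rho[\Phi_i])$, and $\mathbb{E}_\rho[\Phi]=\int\Phi\rho dx$. $\beta$-strong convexity means $g_\rho(\mathrm{Hess}E(\rho)\sigma,\sigma)\ge\beta g_\rho(\sigma,\sigma)$ for all $\rho$ and all $\sigma$ with $\int\sigma=0$, with Hessian w.r.t. the Fisher-Rao metric (equivalently $\frac{d^2}{ds^2}E(\gamma(s))\ge\beta g(\dot\gamma,\dot\gamma)$ along Fisher-Rao geodesics). $\frac{\delta E}{\delta\rho}$ is the $L^2$ first variation. *)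

From HB Require Import structures.
From mathcomp Require Import all_boot all_order all_algebra.
From mathcomp Require Import all_classical all_reals all_analysis.
Set Implicit Arguments. Unset Strict Implicit. Unset Printing Implicit Defensive.
Import Order.TTheory GRing.Theory Num.Theory numFieldNormedType.Exports.
Local Open Scope classical_set_scope.
Local Open Scope ring_scope.

Section FR.
Context {d : measure_display} {T : measurableType d} {R : realType}.
Variable mu : {measure set T -> \bar R}.

Definition pos_density (rho : T -> R) : Prop :=
  [/\ measurable_fun setT rho, (forall x, 0 < rho x),
      mu.-integrable setT (EFin \o rho) & (\int[mu]_x (rho x)%:E = 1)%E].

(** rho0 <> rho1 as elements of P(Omega), i.e. not equal mu-a.e. *)
Definition dens_neq (rho0 rho1 : T -> R) : Prop :=
  ~ {ae mu, forall x, rho0 x = rho1 x}.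

Definition expect (rho Phi : T -> R) : R := Rintegral mu setT (fun x => Phi x * rho x).

(** Fisher-Rao metric g_rho(sigma1,sigma2) = int Phi1 rho (Phi2 - E_rho[Phi2]),
    with sigma_i = rho (Phi_i - E_rho[Phi_i]); we take the representative Phi_i = sigma_i/rho. *)
Definition FR_metric (rho sigma1 sigma2 : T -> R) : R :=
  let Phi1 := fun x => sigma1 x / rho x in
  let Phi2 := fun x => sigma2 x / rho x in
  Rintegral mu setT (fun x => Phi1 x * rho x * (Phi2 x - expect rho Phi2)).

Definition FR_angle (rho0 rho1 : T -> R) : R :=
  acos (Rintegral mu setT (fun x => Num.sqrt (rho0 x) * Num.sqrt (rho1 x))).

Definition FR_geodesic (rho0 rho1 : T -> R) (s : R) : T -> R :=
  let H := FR_angle rho0 rho1 in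
  fun x => ((sin ((1 - s) * H) * Num.sqrt (rho0 x) + sin (s * H) * Num.sqrt (rho1 x))
            / sin H) ^+ 2.

Definition FR_velocity (rho0 rho1 : T -> R) (s : R) : T -> R :=
  fun x => derive1 (fun r => FR_geodesic rho0 rho1 r x) s.

Definition along (E : (T -> R) -> R) (rho0 rho1 : T -> R) : R -> R :=
  fun s => E (FR_geodesic rho0 rho1 s).

(** Smoothness of E together with dE being its (L^2) first variation,
    expressed along all Fisher-Rao geodesics:
    s |-> E(gamma s) is C^1 on [0,1], twice differentiable on ]0,1[, and
    d/ds E(gamma s) = int dE(gamma s) * d/ds gamma(s). *)
Definition FR_smooth (E : (T -> R) -> R) (dE : (T -> R) -> T -> R) : Prop :=
  forall rho0 rho1, pos_density rho0 -> pos_density rho1 -> dens_neq rho0 rho1 ->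
  let f := along E rho0 rho1 in
  let fd := fun s => Rintegral mu setT
              (fun x => dE (FR_geodesic rho0 rho1 s) x * FR_velocity rho0 rho1 s x) in
  [/\ (forall s, 0 <= s <= 1 -> mu.-integrable setT
         (fun x => (dE (FR_geodesic rho0 rho1 s) x * FR_velocity rho0 rho1 s x)%:E)),
      {within `[0, 1], continuous f},
      {within `[0, 1], continuous fd},
      (forall s, 0 < s < 1 -> derivable f s 1 /\ derive1 f s = fd s) &
      (forall s, 0 < s < 1 -> derivable (derive1 f) s 1)].

(** beta-strong convexity w.r.t. Fisher-Rao, in geodesic form:
    d^2/ds^2 E(gamma s) >= beta g(gamma', gamma'). *)
Definition FR_strongly_convex (E : (T -> R) -> R) (beta : R) : Prop :=
  forall rho0 rho1, pos_density rho0 -> pos_density rho1 -> dens_neq rho0 rho1 ->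
  forall s, 0 < s < 1 ->
    derive1n 2 (along E rho0 rho1) s >=
      beta * FR_metric (FR_geodesic rho0 rho1 s)
               (FR_velocity rho0 rho1 s) (FR_velocity rho0 rho1 s).

Definition FR_T (rhot rhos : T -> R) : T -> R :=
  let H := FR_angle rhot rhos in
  fun x => (2 * H / sin H) * ((Num.sqrt (rhos x) - Num.sqrt (rhot x) * cos H)
                              / Num.sqrt (rhot x)).

End FR.

From HB Require Import structures.
From mathcomp Require Import all_boot all_order all_algebra.
From mathcomp Require Import all_classical all_reals all_analysis.
From mathcomp Require Import ring lra.
Import Order.TTheory GRing.Theory Num.Theory numFieldNormedType.Exports.
Local Open Scope classical_set_scope.
Local Open Scope ring_scope.

(* The square root of the Fisher-Rao geodesic from rho_t to rho* is the spherical
   interpolation (slerp) of sqrt rho_t and sqrt rho* at angle H, both lying on the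
   unit sphere of L^2.  So every integrand met along the geodesic is a quadratic
   form in (sqrt rho_t, sqrt rho* ), integrated using int rho = 1 and
   int sqrt rho_t sqrt rho* = cos H: the geodesic has constant speed,
   g(gamma', gamma') = 4 H^2, and its initial velocity T_t rho_t has zero mass and
   int T_t^2 rho_t = 4 H^2.  Strong convexity bounds (E o gamma)'' below by
   4 beta H^2, and a second-order Taylor bound on [0, 1] gives the claim. *)

Section Taylor.
Context {R : realType}.

Lemma is_derive_quadratic (a b s : R) :
  is_derive s 1 (fun r : R => a * r + b / 2 * r ^+ 2) (a + b * s).
Proof.
apply: is_derive_eq.
by rewrite /GRing.scale /= !mulr1; field.
Qed.

Lemma derive1_ge_affine_cc (g : R -> R) (a b : R) :
  {within `[0, 1], continuous g} ->
  (forall s, 0 < s < 1 -> derivable g s 1 /\ a + b * s <= derive1 g s) ->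
  forall x, 0 <= x <= 1 -> g 0 + a * x + b / 2 * x ^+ 2 <= g x.
Proof.
move=> cg dg x /andP[x_ge0 x_le1].
pose q r := a * r + b / 2 * r ^+ 2.
have dq s := @is_derive_quadratic a b s.
have mono : {in `[0, 1]%R &, {homo g - q : r r' / r <= r'}}.
  apply: ger0_derive1_le_cc => [s|s|].
  - rewrite in_itv /= => /dg[dgs _]; exact: derivableB.
  - rewrite in_itv /= => /dg[dgs ge_g']; rewrite derive1E deriveB //.
    by rewrite -derive1E (@derive_val _ _ _ _ _ _ _ (dq s)) subr_ge0.
  - move=> r; apply: continuousD; first exact: cg.
    apply/continuousN/continuous_subspaceT => {}r.
    apply/differentiable_continuous/derivable1_diffP; apply: ex_derive; exact: dq.
have := mono 0 x; rewrite !in_itv /= lexx ler01 x_ge0 x_le1 => /(_ isT isT isT).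
rewrite !fctE /q expr0n /= !mulr0 addr0; lra.
Qed.

Lemma taylor_lower_bound {f f' : R -> R} (c : R) :
  {within `[0, 1], continuous f} -> {within `[0, 1], continuous f'} ->
  (forall s, 0 < s < 1 -> derivable f s 1 /\ derive1 f s = f' s) ->
  (forall s, 0 < s < 1 -> derivable (derive1 f) s 1) ->
  (forall s, 0 < s < 1 -> c <= derive1 (derive1 f) s) ->
  f 0 + f' 0 + c / 2 <= f 1.
Proof.
move=> cf cf' df df' ge_c.
have df'_near (s : R) : 0 < s < 1 -> \forall r \near s, derive1 f r = f' r.
  move=> s01; have := @near_in_itvoo R 0 1 s; rewrite in_itv /= s01 => /(_ isT).
  by apply: filterS => r; rewrite in_itv => /df[].
have f'_ge (s : R) : 0 < s < 1 -> f' 0 + c * s <= f' s.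
  move=> s01; suff : f' 0 + c * s + 0 / 2 * s ^+ 2 <= f' s by rewrite !mul0r addr0.
  apply: derive1_ge_affine_cc => // [r r01|]; last by case/andP: s01 => /ltW -> /ltW ->.
  have dr : is_derive r 1 f' (derive1 (derive1 f) r).
    apply: near_eq_is_derive (df'_near r r01) _.
    by rewrite derive1E; exact/derivableP/df'.
  split; first by apply: ex_derive; exact: dr.
  by rewrite derive1E (@derive_val _ _ _ _ _ _ _ dr) mul0r addr0 ge_c.
have := @derive1_ge_affine_cc f (f' 0) c cf _ 1.
rewrite ler01 lexx expr1n !mulr1; apply => // s s01.
by case: (df s s01) => dfs ->; split => //; exact: f'_ge.
Qed.
End Taylor.

Section Trigonometry.
Context {R : realType}.
Implicit Types a b : R.

Lemma sinB_cosD a b : sin (a - b) * cos (a + b) = sin a * cos a - sin b * cos b.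
Proof.
rewrite sinB cosD; transitivity (sin a * cos a * (cos b ^+ 2 + sin b ^+ 2)
  - sin b * cos b * (cos a ^+ 2 + sin a ^+ 2)); first ring.
by rewrite !cos2Dsin2 !mulr1.
Qed.

Lemma cos2_cos2_cosD a b :
  cos a ^+ 2 + cos b ^+ 2 - 2 * cos a * cos b * cos (a + b) = sin (a + b) ^+ 2.
Proof.
rewrite cosD sinD; transitivity ((sin a * cos b + cos a * sin b) ^+ 2
  + cos a ^+ 2 * (1 - (cos b ^+ 2 + sin b ^+ 2))
  + cos b ^+ 2 * (1 - (cos a ^+ 2 + sin a ^+ 2))); first ring.
by rewrite !cos2Dsin2 subrr !mulr0 !addr0.
Qed.

End Trigonometry.

Section Slerp.
Context {R : realType}.
Variables H A B : R.

Definition slerp (r : R) := (sin ((1 - r) * H) * A + sin (r * H) * B) / sin H.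

Definition slerp_deriv (r : R) := H * (cos (r * H) * B - cos ((1 - r) * H) * A) / sin H.

Hypothesis sinH_neq0 : sin H != 0.

Lemma slerp0 : slerp 0 = A.
Proof. by rewrite /slerp subr0 !mul1r !mul0r sin0 mul0r addr0 mulrAC divff ?mul1r. Qed.

Lemma slerp1 : slerp 1 = B.
Proof. by rewrite /slerp subrr !mul1r !mul0r sin0 mul0r add0r mulrAC divff ?mul1r. Qed.

Lemma slerp_gt0 (s : R) : 0 < H < pi -> 0 < A -> 0 < B -> 0 < s < 1 -> 0 < slerp s.
Proof.
move=> /andP[H_gt0 H_ltpi] A_gt0 B_gt0 /andP[s_gt0 s_lt1].
have sin_gt0 r : 0 < r -> r <= 1 -> 0 < sin (r * H).
  by move=> r_gt0 r_le1; apply: sin_gt0_pi; apply/andP; split; nra.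
have sH : 0 < sin H by rewrite -[H]mul1r sin_gt0 ?ltr01.
by rewrite /slerp divr_gt0 // addr_gt0 // mulr_gt0 // sin_gt0 //; lra.
Qed.

Lemma is_derive_slerp (s : R) : is_derive s 1 slerp (slerp_deriv s).
Proof.
have -> : slerp = (fun r => sin (- H * r + H)) * cst (A / sin H)
                  + (fun r => sin (H * r + 0)) * cst (B / sin H).
  apply/funext => r; rewrite /slerp !fctE /= mulrDl !mulrA.
  by congr (sin _ * _ / _ + sin _ * _ / _); ring.
apply: is_derive_eq; rewrite /slerp_deriv /GRing.scale /= !mulr0 !add0r !addr0 !mulr1.
have -> : - H * s + H = (1 - s) * H by ring.
by rewrite [H * s]mulrC; ring.
Qed.

Lemma slerp_mul_slerp_deriv (s : R) :
  slerp s * slerp_deriv s =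
    (- (H / sin H ^+ 2) * (sin ((1 - s) * H) * cos ((1 - s) * H))) * A ^+ 2
    + (H / sin H ^+ 2 * (sin (s * H) * cos (s * H))) * B ^+ 2
    + (H / sin H ^+ 2 * sin ((1 - s) * H - s * H)) * (A * B).
Proof. by rewrite /slerp /slerp_deriv sinB; field. Qed.

Lemma slerp_deriv_sqr (s : R) :
  slerp_deriv s ^+ 2 =
    (H ^+ 2 / sin H ^+ 2 * cos ((1 - s) * H) ^+ 2) * A ^+ 2
    + (H ^+ 2 / sin H ^+ 2 * cos (s * H) ^+ 2) * B ^+ 2
    + (- (2 * H ^+ 2 / sin H ^+ 2) * cos ((1 - s) * H) * cos (s * H)) * (A * B).
Proof. by rewrite /slerp_deriv; field. Qed.

End Slerp.

Section FisherRaoGeodesic.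
Context {d : measure_display} {T : measurableType d} {R : realType}.
Variable mu : {measure set T -> \bar R}.

Lemma integrable_scaler (k : R) {f : T -> R} :
  mu.-integrable setT (EFin \o f) -> mu.-integrable setT (EFin \o (fun x => k * f x)).
Proof. exact: integrableZl. Qed.

Lemma integrable_addr {f g : T -> R} :
  mu.-integrable setT (EFin \o f) -> mu.-integrable setT (EFin \o g) ->
  mu.-integrable setT (EFin \o (fun x => f x + g x)).
Proof. exact: integrableD. Qed.

Lemma Rintegral_ge0_eq0_ae (g : T -> R) :
  mu.-integrable setT (EFin \o g) -> (forall x, 0 <= g x) ->
  Rintegral mu setT g = 0 -> {ae mu, forall x, g x = 0}.
Proof.
move=> gint g_ge0 g0.
have int_g0 : (\int[mu]_x (g x)%:E = 0)%E.
  by rewrite -(fineK (integrable_fin_num measurableT gint)) -[fine _]/(Rintegral _ _ _) g0.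
have /(ae_eq_integral_abs mu measurableT (measurable_int mu gint)) :
    (\int[mu]_x `|(g x)%:E| = 0)%E.
  by rewrite -int_g0; apply: eq_integral => x _; rewrite gee0_abs // lee_fin.
by apply: filterS => x /(_ I) [].
Qed.

Lemma sqr_sqrt_density {rho : T -> R} :
  pos_density mu rho -> forall x, Num.sqrt (rho x) ^+ 2 = rho x.
Proof. by case=> _ rho_gt0 _ _ x; rewrite sqr_sqrtr // ltW. Qed.

Lemma Rintegral_density {rho : T -> R} :
  pos_density mu rho -> Rintegral mu setT rho = 1.
Proof. by case=> _ _ _ e; rewrite /Rintegral e. Qed.

Variables rho0 rho1 : T -> R.

Definition hellinger_affinity :=
  Rintegral mu setT (fun x => Num.sqrt (rho0 x) * Num.sqrt (rho1 x)).

Lemma hellinger_affinity_ge0 : 0 <= hellinger_affinity.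
Proof. by apply: Rintegral_ge0 => x _; rewrite mulr_ge0 ?sqrtr_ge0. Qed.

Hypotheses (dens0 : pos_density mu rho0) (dens1 : pos_density mu rho1).

Lemma integrable_sqrt_mul :
  mu.-integrable setT (EFin \o (fun x => Num.sqrt (rho0 x) * Num.sqrt (rho1 x))).
Proof.
have [m0 p0 i0 _] := dens0; have [m1 p1 i1 _] := dens1.
have msqrt := measurable_realfun.continuous_measurable_fun (@sqrt_continuous R).
apply: le_integrable (integrableD measurableT i0 i1) => //.
  apply/measurable_realfun.measurable_EFinP/measurable_realfun.measurable_funM.
    exact: measurableT_comp msqrt m0.
  exact: measurableT_comp msqrt m1.
move=> x _ /=; have r0 := ltW (p0 x); have r1 := ltW (p1 x).
rewrite lee_fin !ger0_norm ?mulr_ge0 ?sqrtr_ge0 ?addr_ge0 //.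
have := sqr_sqrtr r0; have := sqr_sqrtr r1.
have := sqrtr_ge0 (rho0 x); have := sqrtr_ge0 (rho1 x).
by move: (Num.sqrt (rho0 x)) (Num.sqrt (rho1 x)) => u v v0 u0 <- <-; nra.
Qed.

Lemma integrable_sqrt_quad {f : T -> R} {a b c : R} :
  (forall x, f x = a * Num.sqrt (rho0 x) ^+ 2 + b * Num.sqrt (rho1 x) ^+ 2
    + c * (Num.sqrt (rho0 x) * Num.sqrt (rho1 x))) ->
  mu.-integrable setT (EFin \o f).
Proof.
move=> fE.
have [_ _ i0 _] := dens0; have [_ _ i1 _] := dens1.
apply: (eq_integrable measurableT (EFin \o (fun x => a * rho0 x + b * rho1 x
    + c * (Num.sqrt (rho0 x) * Num.sqrt (rho1 x))))) => [x _|].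
  by rewrite /= fE !(sqr_sqrt_density dens0, sqr_sqrt_density dens1).
by do 2?apply: integrable_addr; apply: integrable_scaler => //; exact: integrable_sqrt_mul.
Qed.

Lemma Rintegral_sqrt_quad {f : T -> R} {a b c : R} :
  (forall x, f x = a * Num.sqrt (rho0 x) ^+ 2 + b * Num.sqrt (rho1 x) ^+ 2
    + c * (Num.sqrt (rho0 x) * Num.sqrt (rho1 x))) ->
  Rintegral mu setT f = a + b + c * hellinger_affinity.
Proof.
move=> fE.
have [_ _ i0 _] := dens0; have [_ _ i1 _] := dens1.
have i01 := integrable_sqrt_mul.
under eq_Rintegral do rewrite fE !(sqr_sqrt_density dens0, sqr_sqrt_density dens1).
rewrite !RintegralD ?integrable_addr ?integrable_scaler //.
by rewrite !RintegralZl // (Rintegral_density dens0) (Rintegral_density dens1) !mulr1.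
Qed.

Hypothesis rho0_neq_rho1 : dens_neq mu rho0 rho1.

Lemma hellinger_affinity_lt1 : hellinger_affinity < 1.
Proof.
rewrite ltNge; apply/negP => affinity_ge1; apply: rho0_neq_rho1.
pose g x := (Num.sqrt (rho0 x) - Num.sqrt (rho1 x)) ^+ 2.
have gE x : g x = 1 * Num.sqrt (rho0 x) ^+ 2 + 1 * Num.sqrt (rho1 x) ^+ 2
    + -2 * (Num.sqrt (rho0 x) * Num.sqrt (rho1 x)) by rewrite /g; ring.
have : {ae mu, forall x, g x = 0}.
  apply: Rintegral_ge0_eq0_ae => [||]; first exact: integrable_sqrt_quad gE.
    by move=> x; exact: sqr_ge0.
  apply/le_anti/andP; split; last by apply: Rintegral_ge0 => x _; exact: sqr_ge0.
  by rewrite (Rintegral_sqrt_quad gE); lra.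
apply: filterS => x /eqP; rewrite sqrf_eq0 subr_eq0 => /eqP sqrt_eq.
by rewrite -(sqr_sqrt_density dens0 x) -(sqr_sqrt_density dens1 x) sqrt_eq.
Qed.

Local Notation H := (FR_angle mu rho0 rho1).
Local Notation slerp_at x := (slerp H (Num.sqrt (rho0 x)) (Num.sqrt (rho1 x))).
Local Notation slerp_deriv_at x :=
  (slerp_deriv H (Num.sqrt (rho0 x)) (Num.sqrt (rho1 x))).

Lemma FR_angleE : H = acos hellinger_affinity.
Proof. by []. Qed.

Lemma cos_FR_angle : cos H = hellinger_affinity.
Proof.
have p_ge0 := hellinger_affinity_ge0; have p_lt1 := hellinger_affinity_lt1.
by rewrite FR_angleE acosK // in_itv /=; apply/andP; split; lra.
Qed.

Lemma FR_angle_gt0 : 0 < H.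
Proof.
have p_ge0 := hellinger_affinity_ge0; have p_lt1 := hellinger_affinity_lt1.
by rewrite FR_angleE acos_gt0 //; apply/andP; split; lra.
Qed.

Lemma FR_angle_lt_pi : H < pi.
Proof.
have p_ge0 := hellinger_affinity_ge0; have p_lt1 := hellinger_affinity_lt1.
by rewrite FR_angleE acos_ltpi //; apply/andP; split; lra.
Qed.

Lemma sin_FR_angle_neq0 : sin H != 0.
Proof.
by rewrite lt0r_neq0 // sin_gt0_pi // FR_angle_gt0 FR_angle_lt_pi.
Qed.

Lemma FR_geodesicE s x : FR_geodesic mu rho0 rho1 s x = slerp_at x s ^+ 2.
Proof. by []. Qed.

Lemma FR_geodesic0 : FR_geodesic mu rho0 rho1 0 = rho0.
Proof.
by apply/funext => x; rewrite FR_geodesicE slerp0 ?sqr_sqrt_density ?sin_FR_angle_neq0.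
Qed.

Lemma FR_geodesic1 : FR_geodesic mu rho0 rho1 1 = rho1.
Proof.
by apply/funext => x; rewrite FR_geodesicE slerp1 ?sqr_sqrt_density ?sin_FR_angle_neq0.
Qed.

Lemma FR_velocityE s x :
  FR_velocity mu rho0 rho1 s x = 2 * (slerp_at x s * slerp_deriv_at x s).
Proof.
have -> : FR_velocity mu rho0 rho1 s x = derive1 (slerp_at x ^+ 2) s.
  by congr derive1; apply/funext => r; rewrite exprfctE.
rewrite derive1E (@derive_val _ _ _ _ _ _ _ (is_deriveX 2 (is_derive_slerp _ _ _ s))).
by rewrite /GRing.scale /= expr1 mulrA.
Qed.

Lemma Rintegral_slerp_mul_deriv s :
  Rintegral mu setT (fun x => slerp_at x s * slerp_deriv_at x s) = 0.
Proof.
have S0 := sin_FR_angle_neq0.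
rewrite (Rintegral_sqrt_quad (fun x => slerp_mul_slerp_deriv H _ _ S0 s)) -cos_FR_angle.
have -> : cos H = cos ((1 - s) * H + s * H) by rewrite -mulrDl subrK mul1r.
set a := (1 - s) * H; set b := s * H.
transitivity (H / sin H ^+ 2
  * (sin (a - b) * cos (a + b) - (sin a * cos a - sin b * cos b))); first ring.
by rewrite sinB_cosD subrr mulr0.
Qed.

Lemma Rintegral_slerp_deriv_sqr s :
  Rintegral mu setT (fun x => slerp_deriv_at x s ^+ 2) = H ^+ 2.
Proof.
have S0 := sin_FR_angle_neq0.
rewrite (Rintegral_sqrt_quad (fun x => slerp_deriv_sqr H _ _ S0 s)) -cos_FR_angle.
have -> : cos H = cos ((1 - s) * H + s * H) by rewrite -mulrDl subrK mul1r.
set a := (1 - s) * H; set b := s * H.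
transitivity (H ^+ 2 / sin H ^+ 2
  * (cos a ^+ 2 + cos b ^+ 2 - 2 * cos a * cos b * cos (a + b))); first ring.
by rewrite cos2_cos2_cosD /a /b -mulrDl subrK mul1r divfK // sqrf_eq0.
Qed.

Lemma integrable_slerp_mul_deriv s :
  mu.-integrable setT (EFin \o (fun x => slerp_at x s * slerp_deriv_at x s)).
Proof.
exact: integrable_sqrt_quad (fun x => slerp_mul_slerp_deriv H _ _ sin_FR_angle_neq0 s).
Qed.

Lemma integrable_slerp_deriv_sqr s :
  mu.-integrable setT (EFin \o (fun x => slerp_deriv_at x s ^+ 2)).
Proof. exact: integrable_sqrt_quad (fun x => slerp_deriv_sqr H _ _ sin_FR_angle_neq0 s). Qed.

Lemma integrable_FR_velocity s :
  mu.-integrable setT (EFin \o FR_velocity mu rho0 rho1 s).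
Proof.
apply: eq_integrable (integrable_scaler 2 (integrable_slerp_mul_deriv s)) => // x _.
by rewrite /= FR_velocityE.
Qed.

Lemma Rintegral_FR_velocity s : Rintegral mu setT (FR_velocity mu rho0 rho1 s) = 0.
Proof.
rewrite (eq_Rintegral mu (fun x _ => FR_velocityE s x)).
by rewrite RintegralZl ?integrable_slerp_mul_deriv // Rintegral_slerp_mul_deriv mulr0.
Qed.

Lemma FR_metric_velocity s : 0 < s < 1 ->
  FR_metric mu (FR_geodesic mu rho0 rho1 s)
    (FR_velocity mu rho0 rho1 s) (FR_velocity mu rho0 rho1 s) = 4 * H ^+ 2.
Proof.
move=> s01.
have slerp_neq0 x : slerp_at x s != 0.
  rewrite lt0r_neq0 // slerp_gt0 ?sqrtr_gt0 ?FR_angle_gt0 ?FR_angle_lt_pi //.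
  - by have [_ ->] := dens0.
  - by have [_ ->] := dens1.
have geodesic_neq0 x : FR_geodesic mu rho0 rho1 s x != 0.
  by rewrite FR_geodesicE sqrf_eq0.
have expect0 : expect mu (FR_geodesic mu rho0 rho1 s)
    (fun x => FR_velocity mu rho0 rho1 s x / FR_geodesic mu rho0 rho1 s x) = 0.
  by rewrite -(Rintegral_FR_velocity s); apply: eq_Rintegral => x _; rewrite divfK.
rewrite /FR_metric /= expect0.
transitivity (Rintegral mu setT (fun x => 4 * slerp_deriv_at x s ^+ 2)).
  apply: eq_Rintegral => x _; rewrite subr0 divfK // FR_velocityE FR_geodesicE.
  by field; rewrite slerp_neq0.
by rewrite RintegralZl ?integrable_slerp_deriv_sqr // Rintegral_slerp_deriv_sqr.
Qed.

Lemma FR_velocity0 x : FR_velocity mu rho0 rho1 0 x = FR_T mu rho0 rho1 x * rho0 x.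
Proof.
have S0 := sin_FR_angle_neq0; have [_ p0 _ _] := dens0.
have u0 : Num.sqrt (rho0 x) != 0 by rewrite lt0r_neq0 // sqrtr_gt0.
rewrite FR_velocityE slerp0 // /slerp_deriv /FR_T /= mul0r cos0 subr0 !mul1r.
move: (sqr_sqrt_density dens0 x) u0; move: (Num.sqrt (rho0 x)) => u <- u0.
by field; rewrite u0 S0.
Qed.

Lemma Rintegral_FR_T_sqr :
  Rintegral mu setT (fun x => FR_T mu rho0 rho1 x ^+ 2 * rho0 x) = 4 * H ^+ 2.
Proof.
have S0 := sin_FR_angle_neq0; have [_ p0 _ _] := dens0.
transitivity (Rintegral mu setT (fun x => 4 * slerp_deriv_at x 0 ^+ 2)).
  apply: eq_Rintegral => x _.
  have u0 : Num.sqrt (rho0 x) != 0 by rewrite lt0r_neq0 // sqrtr_gt0.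
  rewrite /FR_T /slerp_deriv /= mul0r cos0 subr0 !mul1r.
  move: (sqr_sqrt_density dens0 x) u0; move: (Num.sqrt (rho0 x)) => u <- u0.
  by field; rewrite u0 S0.
by rewrite RintegralZl ?integrable_slerp_deriv_sqr // Rintegral_slerp_deriv_sqr.
Qed.

Lemma Rintegral_centered_FR_T (f : T -> R) :
  mu.-integrable setT (EFin \o (fun x => f x * FR_velocity mu rho0 rho1 0 x)) ->
  Rintegral mu setT (fun x => (f x - expect mu rho0 f) * FR_T mu rho0 rho1 x * rho0 x)
  = Rintegral mu setT (fun x => f x * FR_velocity mu rho0 rho1 0 x).
Proof.
move=> int_f.
under eq_Rintegral do rewrite -mulrA -FR_velocity0 mulrBl.
rewrite RintegralB ?integrable_scaler ?integrable_FR_velocity //.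
by rewrite RintegralZl ?integrable_FR_velocity // Rintegral_FR_velocity mulr0 subr0.
Qed.

End FisherRaoGeodesic.

Theorem proposition9 (d : measure_display) (T : measurableType d) (R : realType)
  (mu : {measure set T -> \bar R})
  (E : (T -> R) -> R) (dE : (T -> R) -> T -> R) (beta : R)
  (rhot rhos : T -> R) :
  0 <= beta ->
  FR_smooth mu E dE ->
  FR_strongly_convex mu E beta ->
  pos_density mu rhot -> pos_density mu rhos -> dens_neq mu rhot rhos ->
  E rhos >= E rhot
    + Rintegral mu setT (fun x =>
        (dE rhot x - expect mu rhot (dE rhot)) * FR_T mu rhot rhos x * rhot x)
    + beta / 2 * Rintegral mu setT (fun x => FR_T mu rhot rhos x ^+ 2 * rhot x).
Proof.
move=> _ smooth convex dens_t dens_s neq.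
have [int_dE cont_E cont_dE der_E der2_E] := smooth rhot rhos dens_t dens_s neq.
have := int_dE 0; rewrite lexx ler01 FR_geodesic0 // => /(_ isT) int_dE0.
rewrite Rintegral_centered_FR_T // Rintegral_FR_T_sqr //.
have := taylor_lower_bound (beta * (4 * FR_angle mu rhot rhos ^+ 2))
  cont_E cont_dE der_E der2_E.
rewrite /along FR_geodesic0 // FR_geodesic1 //.
rewrite mulrAC; apply=> s s01; rewrite -(FR_metric_velocity _ _ _ dens_t dens_s neq _ s01).
exact: convex.
Qed.
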